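(* Consider the ordered streaming model for trees without vertex moves (defined in the context). For every drawing algorithm in this model there exist a tree with $n$ edges and an order of arrival of its edges (together with the rotation information) for which the algorithm's drawing requires area $\Omega(2^{n/2})$.
   Context: Ordered streaming model: a connected graph $G$ (here a tree) is revealed one edge at a time; at all times the revealed graph is connected and edges never disappear. Together with each new edge $e$ the algorithm is told the position of $e$ in the clockwise cyclic order of the edges incident to each of its endpoints (among the edges incident to that endpoint). Upon arrival, $e$ must immediately be incorporated into a planar straight-line drawing of the current graph in which every vertex is placed at a grid point (integer coordinates), consistent with the given clockwise orders. ''Without vertex moves'' means that once a vertex has been placed, its position never changes. The area of a drawing is the area of the smallest axis-parallel bounding box of the grid points used. *)

From Stdlib Require Import Reals List ZArith Lia.
Import ListNotations.
Open Scope R_scope.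

(** Vertices are named by their
  order of arrival: the first edge (index 0) joins vertices 0 and 1; edge
  number k (k >= 1) joins the already present vertex [p] to the new vertex
  [k+1], where [nth k s = (p, w)].  Since the revealed graph is a connected
  tree, every new edge has exactly one new endpoint, which is a leaf, so the
  clockwise-order information at the new endpoint is trivial.  The order
  information at [p] is encoded by [w]: a current neighbour of [p] such that,
  in the clockwise order around [p] among the edges currently incident to [p],
  the new edge comes immediately after the edge [p w].  For step 0 the
  (dummy) step is required to be (0,0). *)

Definition step := (nat * nat)%type.

Definition src (s : list step) (j : nat) : nat := fst (nth j s (0%nat, 0%nat)).
Definition refn (s : list step) (j : nat) : nat := snd (nth j s (0%nat, 0%nat)).

Definition adj_before (s : list step) (k p q : nat) : Prop :=
  exists j, (j < k)%nat /\
    ((src s j = p /\ S j = q) \/ (src s j = q /\ S j = p)).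

Definition valid_input (s : list step) : Prop :=
  forall k, (k < length s)%nat ->
    if Nat.eqb k 0 then src s k = 0%nat /\ refn s k = 0%nat
    else (src s k <= k)%nat /\ adj_before s k (src s k) (refn s k).

(** A (deterministic) algorithm maps the prefix of the stream seen so far to the
  grid point of the newly arrived vertex: [alg (firstn i s)] is the position of
  vertex i (vertex 0 is placed without any information, together with vertex 1
  on arrival of the first edge).  Positions, once chosen, never change. *)

Definition point := (Z * Z)%type.
Definition algorithm := list step -> point.

Definition pos (alg : algorithm) (s : list step) (i : nat) : point :=
  alg (firstn i s).

Definition toR (a : point) : R * R := (IZR (fst a), IZR (snd a)).

Definition on_seg (a b : point) (x : R * R) : Prop :=
  exists t : R, 0 <= t <= 1 /\
    fst x = IZR (fst a) + t * (IZR (fst b) - IZR (fst a)) /\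
    snd x = IZR (snd a) + t * (IZR (snd b) - IZR (snd a)).

Definition planar_drawing (s : list step) (P : nat -> point) : Prop :=
  let m := length s in
  (forall i j, (i <= m)%nat -> (j <= m)%nat -> P i = P j -> i = j) /\
  (forall j c, (j < m)%nat -> (c <= m)%nat -> c <> src s j -> c <> S j ->
     ~ on_seg (P (src s j)) (P (S j)) (toR (P c))) /\
  (forall j1 j2, (j1 < m)%nat -> (j2 < m)%nat -> j1 <> j2 ->
     forall x : R * R,
       on_seg (P (src s j1)) (P (S j1)) x ->
       on_seg (P (src s j2)) (P (S j2)) x ->
       exists u, (u = src s j1 \/ u = S j1) /\ (u = src s j2 \/ u = S j2)
                 /\ x = toR (P u)).

(** Angular order of nonzero integer direction vectors, counterclockwise
    starting from the positive x-axis (y axis pointing up). *)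
Definition vsub (a b : point) : point := (fst a - fst b, snd a - snd b)%Z.
Definition cross (a b : point) : Z := (fst a * snd b - snd a * fst b)%Z.
Definition upper (d : point) : Prop :=
  (0 < snd d)%Z \/ (snd d = 0%Z /\ (0 < fst d)%Z).
Definition ang_lt (a b : point) : Prop :=
  (upper a /\ ~ upper b) \/ ((upper a <-> upper b) /\ (0 < cross a b)%Z).
Definition ccw_cyclic (a b c : point) : Prop :=
  (ang_lt a b /\ ang_lt b c) \/ (ang_lt b c /\ ang_lt c a) \/
  (ang_lt c a /\ ang_lt a b).

(** Consistency of the drawing with the clockwise order information of the
    last step k = length s - 1 (k >= 1): with (p, w) the k-th step and
    v = k+1 the new vertex, the edge p v comes immediately after p w in the
    clockwise order around p, i.e. no other current neighbour q of p is met
    strictly between them when turning counterclockwise from p v to p w. *)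
Definition rotation_ok (s : list step) (P : nat -> point) : Prop :=
  let k := (length s - 1)%nat in
  let p := src s k in
  let w := refn s k in
  let v := S k in
  let dir x := vsub (P x) (P p) in
  forall q, q <> w -> adj_before s k p q -> ~ ccw_cyclic (dir v) (dir q) (dir w).

(** An algorithm in the model: on every admissible stream, after every edge
    arrival (= on every admissible prefix) the current drawing is a planar
    straight-line grid drawing consistent with the given clockwise orders. *)
Definition valid_algorithm (alg : algorithm) : Prop :=
  forall s, valid_input s ->
    planar_drawing s (pos alg s) /\
    ((2 <= length s)%nat -> rotation_ok s (pos alg s)).

Definition zmax (l : list Z) (d : Z) : Z := fold_left Z.max l d.
Definition zmin (l : list Z) (d : Z) : Z := fold_left Z.min l d.

Definition drawing_area (alg : algorithm) (s : list step) : Z :=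
  let P := pos alg s in
  let vs := seq 0 (S (length s)) in
  let xs := map (fun i => fst (P i)) vs in
  let ys := map (fun i => snd (P i)) vs in
  ((zmax xs (fst (P 0%nat)) - zmin xs (fst (P 0%nat))) *
   (zmax ys (snd (P 0%nat)) - zmin ys (snd (P 0%nat))))%Z.

From Pilot Require Import Defs.
From Stdlib Require Import Reals List ZArith Lia Psatz.
Import ListNotations.
Open Scope R_scope.

(** The adversary streams a star centred at vertex 0.  It maintains two leaves x, y and
  announces every new edge 0v immediately clockwise after 0y, so that in any drawing the
  direction of 0v lies strictly inside the counterclockwise sector from 0x to 0y; planarity
  makes the spoke directions pairwise distinct, so this sector order is a genuine cyclic
  order.  The adversary then keeps whichever of the two sectors (x, v), (v, y) contains fewer
  grid points of the box [-B, B]^2 around vertex 0: the number of box points in the current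
  sector thus more than halves each round, so after n - 2 rounds the box has about 2^n
  points.  A drawing of area at most B is non-degenerate, hence of width and height at
  most B, and lies in that box; choosing B = 2^((n-7)/2) yields area > B = Omega(2^(n/2)). *)

Section CyclicOrder.
Variables (T : Type) (lt : T -> T -> Prop).
Hypothesis lt_irrefl : forall a, ~ lt a a.
Hypothesis lt_trans : forall a b c, lt a b -> lt b c -> lt a c.

Definition cyclic (a b c : T) : Prop :=
  (lt a b /\ lt b c) \/ (lt b c /\ lt c a) \/ (lt c a /\ lt a b).

Ltac lt_cycle := match goal with
  | H1 : lt ?a ?a |- _ => exfalso; exact (lt_irrefl a H1)
  | H1 : lt ?a ?b, H2 : lt ?b ?a |- _ =>
      exfalso; exact (lt_irrefl a (lt_trans _ _ _ H1 H2))
  | H1 : lt ?a ?b, H2 : lt ?b ?c, H3 : lt ?c ?a |- _ =>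
      exfalso; exact (lt_irrefl a (lt_trans _ _ _ H1 (lt_trans _ _ _ H2 H3)))
  | H1 : lt ?a ?b, H2 : lt ?b ?c, H3 : lt ?c ?d, H4 : lt ?d ?a |- _ =>
      exfalso; exact (lt_irrefl a
        (lt_trans _ _ _ H1 (lt_trans _ _ _ H2 (lt_trans _ _ _ H3 H4))))
  end.

Ltac cyclic_case := first
  [ lt_cycle
  | left; split; eauto; fail
  | right; left; split; eauto; fail
  | right; right; split; eauto; fail ].

Ltac solve_cyclic := unfold cyclic, not in *; intros;
  repeat match goal with
  | H : _ /\ _ |- _ => destruct H
  | H : _ \/ _ |- _ => destruct H
  end; cyclic_case.

Lemma cyclic_sub_l x v y z : cyclic x v y -> cyclic x z v -> cyclic x z y.
Proof. solve_cyclic. Qed.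

Lemma cyclic_sub_r x v y z : cyclic x v y -> cyclic v z y -> cyclic x z y.
Proof. solve_cyclic. Qed.

Lemma cyclic_sub_disjoint x v y z : cyclic x v y -> cyclic x z v -> ~ cyclic v z y.
Proof. solve_cyclic. Qed.

Lemma cyclic_nrefl_r x v : ~ cyclic x v v.
Proof. solve_cyclic. Qed.

Lemma cyclic_nrefl_l v y : ~ cyclic v v y.
Proof. solve_cyclic. Qed.

Lemma cyclic_swap_of_not a b c :
  (lt a b \/ lt b a) -> (lt b c \/ lt c b) -> (lt a c \/ lt c a) ->
  ~ cyclic a b c -> cyclic b a c.
Proof.
  unfold cyclic; intros Hab Hbc Hac Habc.
  destruct Hab, Hbc, Hac; try cyclic_case; exfalso; apply Habc; cyclic_case.
Qed.

End CyclicOrder.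

Lemma upper_dec (d : point) : {upper d} + {~ upper d}.
Proof.
  unfold upper.
  destruct (Z_lt_dec 0 (snd d)), (Z.eq_dec (snd d) 0), (Z_lt_dec 0 (fst d));
    (left; lia) || (right; lia).
Qed.

Lemma cross_pos_trans_upper (a b c : point) :
  upper a -> upper b -> upper c ->
  (0 < cross a b)%Z -> (0 < cross b c)%Z -> (0 < cross a c)%Z.
Proof.
  destruct a as [a1 a2], b as [b1 b2], c as [c1 c2]; unfold upper, cross; simpl.
  intros Ha Hb Hc Hab Hbc.
  (* linear dependence of three plane vectors, written with their cross products *)
  assert (E2 : ((a1*b2-a2*b1)*c2 + (b1*c2-b2*c1)*a2 + (c1*a2-c2*a1)*b2 = 0)%Z) by ring.
  assert (E1 : ((a1*b2-a2*b1)*c1 + (b1*c2-b2*c1)*a1 + (c1*a2-c2*a1)*b1 = 0)%Z) by ring.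
  destruct Hb as [Hb|[-> Hb]].
  - destruct Ha as [Ha|[-> Ha]]; [nia|].
    destruct Hc as [Hc|[-> Hc]]; nia.
  - destruct Ha as [Ha|[-> Ha]]; nia.
Qed.

Definition vopp (a : point) : point := (- fst a, - snd a)%Z.

Lemma cross_vopp a b : cross (vopp a) (vopp b) = cross a b.
Proof. unfold cross, vopp; simpl; ring. Qed.

Lemma upper_vopp a : a <> (0, 0)%Z -> ~ upper a -> upper (vopp a).
Proof.
  destruct a as [a1 a2]; unfold upper, vopp; simpl; intros Ha Hu.
  destruct (Z.eq_dec a1 0), (Z.eq_dec a2 0); subst; [congruence|lia..].
Qed.

Lemma ang_lt_irrefl a : ~ ang_lt a a.
Proof. unfold ang_lt, cross. intros [[]|[_ H]]; [tauto|lia]. Qed.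

Lemma ang_lt_trans a b c : ang_lt a b -> ang_lt b c -> ang_lt a c.
Proof.
  unfold ang_lt; intros [[Ua Ub]|[Eab Cab]] Hbc; [destruct Hbc; tauto|].
  destruct Hbc as [[Ub Uc]|[Ebc Cbc]]; [tauto|].
  right; split; [tauto|].
  destruct (upper_dec b) as [Ub|Ub]; [apply cross_pos_trans_upper with b; tauto|].
  assert (a <> (0, 0)%Z) by (intros ->; unfold cross in Cab; simpl in Cab; lia).
  assert (b <> (0, 0)%Z) by (intros ->; unfold cross in Cab; simpl in Cab; lia).
  assert (c <> (0, 0)%Z) by (intros ->; unfold cross in Cbc; simpl in Cbc; lia).
  rewrite <- cross_vopp; apply cross_pos_trans_upper with (vopp b);
    try apply upper_vopp; try rewrite cross_vopp; tauto.
Qed.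

Lemma ang_lt_dec a b : {ang_lt a b} + {~ ang_lt a b}.
Proof.
  unfold ang_lt.
  destruct (upper_dec a), (upper_dec b), (Z_lt_dec 0 (cross a b)); tauto.
Qed.

Lemma ccw_cyclic_dec a b c : {ccw_cyclic a b c} + {~ ccw_cyclic a b c}.
Proof.
  unfold ccw_cyclic.
  destruct (ang_lt_dec a b), (ang_lt_dec b c), (ang_lt_dec c a); tauto.
Qed.
Definition dot (a b : point) : Z := (fst a * fst b + snd a * snd b)%Z.
Definition norm2 (a : point) : Z := dot a a.

Lemma cross_anti a b : cross b a = (- cross a b)%Z.
Proof. unfold cross; ring. Qed.

Lemma dot_comm a b : dot b a = dot a b.
Proof. unfold dot; ring. Qed.

Lemma dot_vopp a b : dot (vopp a) (vopp b) = dot a b.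
Proof. unfold dot, vopp; simpl; ring. Qed.

Lemma dot_cross_lagrange a b :
  (dot a b * dot a b + cross a b * cross a b = norm2 a * norm2 b)%Z.
Proof. unfold norm2, dot, cross; ring. Qed.

Lemma norm2_ge0 a : (0 <= norm2 a)%Z.
Proof. unfold norm2, dot; nia. Qed.

Lemma dot_pos_upper a b : upper a -> upper b -> cross a b = 0%Z -> (0 < dot a b)%Z.
Proof.
  destruct a as [a1 a2], b as [b1 b2]; unfold upper, cross, dot; simpl.
  intros [Ha|[-> Ha]] [Hb|[-> Hb]] C; nia.
Qed.

Lemma dot_pos_of_parallel a b :
  a <> (0, 0)%Z -> b <> (0, 0)%Z -> (upper a <-> upper b) -> cross a b = 0%Z ->
  (0 < dot a b)%Z.
Proof.
  intros Ha Hb E C.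
  destruct (upper_dec a) as [Ua|Ua]; [apply dot_pos_upper; tauto|].
  rewrite <- dot_vopp; apply dot_pos_upper; try apply upper_vopp; try tauto.
  rewrite cross_vopp; exact C.
Qed.

Lemma on_seg_of_parallel (o a b : point) :
  let u := vsub a o in let v := vsub b o in
  cross u v = 0%Z -> (0 < dot u v)%Z -> (dot u v <= norm2 v)%Z ->
  on_seg o b (toR a).
Proof.
  destruct o as [x0 y0], a as [xa ya], b as [xb yb].
  unfold vsub, cross, norm2, dot, on_seg, toR; simpl; intros C D N.
  set (d := ((xa - x0) * (xb - x0) + (ya - y0) * (yb - y0))%Z) in *.
  set (nb := ((xb - x0) * (xb - x0) + (yb - y0) * (yb - y0))%Z) in *.
  (* a - o is the multiple d / nb of b - o *)
  assert (Ex : ((xa - x0) * nb = d * (xb - x0))%Z).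
  { apply Z.sub_move_0_r; rewrite <- (Z.mul_0_r (yb - y0)), <- C; unfold d, nb; ring. }
  assert (Ey : ((ya - y0) * nb = d * (yb - y0))%Z).
  { apply Z.sub_move_0_r; rewrite <- (Z.mul_0_r (x0 - xb)), <- C; unfold d, nb; ring. }
  apply IZR_eq in Ex, Ey; rewrite !mult_IZR, !minus_IZR in Ex, Ey.
  apply IZR_lt in D; apply IZR_le in N.
  assert (Hnb : 0 < IZR nb) by lra.
  set (t := IZR d / IZR nb).
  assert (Ht : t * IZR nb = IZR d) by (unfold t; field; lra).
  exists t; split; [split|split]; [nra|nra|..];
    apply Rmult_eq_reg_r with (IZR nb); try lra.
  - transitivity (IZR x0 * IZR nb + t * IZR nb * (IZR xb - IZR x0)); [|ring].
    rewrite Ht; lra.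
  - transitivity (IZR y0 * IZR nb + t * IZR nb * (IZR yb - IZR y0)); [|ring].
    rewrite Ht; lra.
Qed.

Definition star (s : list step) : Prop :=
  forall j, (j < length s)%nat -> src s j = 0%nat.

Definition spoke (P : nat -> point) (i : nat) : point := vsub (P i) (P 0%nat).

Section StarDrawing.
Variables (s : list step) (P : nat -> point).
Hypothesis drawing : planar_drawing s P.
Hypothesis star_s : star s.

Lemma spoke_neq0 i : (1 <= i <= length s)%nat -> spoke P i <> (0, 0)%Z.
Proof.
  destruct drawing as [inj _]; unfold spoke, vsub; intros Hi E.
  assert (P i = P 0%nat) by (destruct (P i), (P 0%nat); simpl in E; injection E; intros;
    f_equal; lia).
  apply inj in H; lia.
Qed.

(* Vertex i would lie on the edge 0 j. *)
Lemma spokes_not_nested i j :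
  (1 <= i <= length s)%nat -> (1 <= j <= length s)%nat -> i <> j ->
  cross (spoke P i) (spoke P j) = 0%Z -> (0 < dot (spoke P i) (spoke P j))%Z ->
  ~ (norm2 (spoke P i) <= norm2 (spoke P j))%Z.
Proof.
  destruct drawing as [_ [no_touch _]]; intros Hi Hj Hij C D N.
  pose proof (dot_cross_lagrange (spoke P i) (spoke P j)) as L.
  rewrite C in L. pose proof (norm2_ge0 (spoke P i)).
  apply (no_touch (pred j) i); rewrite ?star_s; try lia.
  replace (S (pred j)) with j by lia.
  apply on_seg_of_parallel; fold (spoke P i) (spoke P j); auto; nia.
Qed.

Lemma spokes_comparable i j :
  (1 <= i <= length s)%nat -> (1 <= j <= length s)%nat -> i <> j ->
  ang_lt (spoke P i) (spoke P j) \/ ang_lt (spoke P j) (spoke P i).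
Proof.
  intros Hi Hj Hij.
  destruct (ang_lt_dec (spoke P i) (spoke P j)) as [|nij]; [auto|].
  destruct (ang_lt_dec (spoke P j) (spoke P i)) as [|nji]; [auto|].
  exfalso; unfold ang_lt in nij, nji; rewrite cross_anti in nji.
  assert (E : upper (spoke P i) <-> upper (spoke P j))
    by (destruct (upper_dec (spoke P i)), (upper_dec (spoke P j)); tauto).
  assert (C : cross (spoke P i) (spoke P j) = 0%Z)
    by (destruct (Z.lt_trichotomy (cross (spoke P i) (spoke P j)) 0) as [c|[c|c]];
        [exfalso; apply nji | exact c | exfalso; apply nij]; right; split; tauto || lia).
  pose proof (dot_pos_of_parallel _ _ (spoke_neq0 i Hi) (spoke_neq0 j Hj) E C) as D.
  destruct (Z.le_ge_cases (norm2 (spoke P i)) (norm2 (spoke P j))).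
  - exact (spokes_not_nested i j Hi Hj Hij C D H).
  - apply (spokes_not_nested j i Hj Hi); auto; [rewrite cross_anti|rewrite dot_comm]; lia.
Qed.

Lemma spokes_not_collinear :
  (3 <= length s)%nat ->
  ~ (forall i j, (1 <= i <= 3)%nat -> (1 <= j <= 3)%nat ->
       cross (spoke P i) (spoke P j) = 0%Z).
Proof.
  intros L C.
  (* collinear directions compare only by [upper], which has two values for three spokes *)
  assert (U : forall i j, (1 <= i <= 3)%nat -> (1 <= j <= 3)%nat -> i <> j ->
            ~ (upper (spoke P i) <-> upper (spoke P j))).
  { intros i j Hi Hj Hij E.
    destruct (spokes_comparable i j) as [H|H]; try lia; unfold ang_lt in H;
      rewrite ?(C i j), ?(C j i) in H by lia; destruct H as [|[_ H]]; tauto || lia. }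
  pose proof (U 1%nat 2%nat ltac:(lia) ltac:(lia) ltac:(lia)).
  pose proof (U 2%nat 3%nat ltac:(lia) ltac:(lia) ltac:(lia)).
  pose proof (U 1%nat 3%nat ltac:(lia) ltac:(lia) ltac:(lia)).
  destruct (upper_dec (spoke P 1%nat)), (upper_dec (spoke P 2%nat)),
    (upper_dec (spoke P 3%nat)); tauto.
Qed.

End StarDrawing.

Definition point_eq_dec (a b : point) : {a = b} + {a <> b}.
Proof. decide equality; apply Z.eq_dec. Defined.

Definition in_sector (X Y z : point) : bool :=
  if ccw_cyclic_dec X z Y then true else false.

Definition sector_count (l : list point) (X Y : point) : nat :=
  length (filter (in_sector X Y) l).

Lemma sector_count_le l X Y : (sector_count l X Y <= length l)%nat.
Proof. apply filter_length_le. Qed.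

Lemma sector_count_split l X V Y :
  ccw_cyclic X V Y -> In V l ->
  (sector_count l X V + sector_count l V Y < sector_count l X Y)%nat.
Proof.
  intros XVY HV.
  enough (sector_count l X V + sector_count l V Y + count_occ point_eq_dec l V
            <= sector_count l X Y)%nat
    by (apply (count_occ_In point_eq_dec) in HV; lia).
  assert (sub_l : forall z, ccw_cyclic X z V -> ccw_cyclic X z Y)
    by exact (fun z => cyclic_sub_l _ _ ang_lt_irrefl ang_lt_trans X V Y z XVY).
  assert (sub_r : forall z, ccw_cyclic V z Y -> ccw_cyclic X z Y)
    by exact (fun z => cyclic_sub_r _ _ ang_lt_irrefl ang_lt_trans X V Y z XVY).
  assert (disj : forall z, ccw_cyclic X z V -> ccw_cyclic V z Y -> False)
    by exact (fun z => cyclic_sub_disjoint _ _ ang_lt_irrefl ang_lt_trans X V Y z XVY).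
  assert (nrefl_r : ~ ccw_cyclic X V V)
    by exact (cyclic_nrefl_r _ _ ang_lt_irrefl ang_lt_trans X V).
  assert (nrefl_l : ~ ccw_cyclic V V Y)
    by exact (cyclic_nrefl_l _ _ ang_lt_irrefl ang_lt_trans V Y).
  clear HV; unfold sector_count, in_sector; induction l as [|z l IH]; simpl; [lia|].
  destruct (ccw_cyclic_dec X z V), (ccw_cyclic_dec V z Y), (point_eq_dec z V),
    (ccw_cyclic_dec X z Y); subst; simpl; try lia; exfalso; eauto.
Qed.

Definition zrange (B : Z) : list Z :=
  map (fun k => Z.of_nat k - B)%Z (seq 0 (Z.to_nat (2 * B + 1))).

Definition box (B : Z) : list point := list_prod (zrange B) (zrange B).

Lemma in_zrange B z : (- B <= z <= B)%Z -> In z (zrange B).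
Proof.
  intros H; apply in_map_iff; exists (Z.to_nat (z + B)); split; [lia|].
  apply in_seq; lia.
Qed.

Lemma in_box B (p : point) :
  (- B <= fst p <= B)%Z -> (- B <= snd p <= B)%Z -> In p (box B).
Proof. destruct p; intros; apply in_prod; apply in_zrange; auto. Qed.

Lemma length_box B :
  length (box B) = (Z.to_nat (2 * B + 1) * Z.to_nat (2 * B + 1))%nat.
Proof.
  unfold box; etransitivity; [apply length_prod|].
  unfold zrange; rewrite length_map, length_seq; reflexivity.
Qed.

Definition star_stream (s : list step) : Prop :=
  forall k, (k < length s)%nat ->
    src s k = 0%nat /\ (k = 0%nat -> refn s k = 0%nat) /\
    (k <> 0%nat -> (1 <= refn s k <= k)%nat).

Lemma star_stream_valid s : star_stream s -> valid_input s.
Proof.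
  intros G k Hk; destruct (G k Hk) as [Hsrc [H0 HS]].
  destruct (Nat.eqb_spec k 0) as [->|Hk0]; [auto|].
  specialize (HS Hk0); split; [lia|].
  exists (pred (refn s k)); split; [lia|].
  left; split; [rewrite Hsrc; apply G; lia | lia].
Qed.

Lemma star_stream_star s : star_stream s -> star s.
Proof. intros G j Hj; apply G, Hj. Qed.

Lemma star_stream_snoc s y :
  star_stream s -> (1 <= y <= length s)%nat -> star_stream (s ++ [(0%nat, y)]).
Proof.
  intros G Hy k Hk; rewrite length_app in Hk; simpl in Hk.
  unfold src, refn; destruct (Nat.eq_dec k (length s)) as [->|Hne].
  - rewrite nth_middle; simpl; lia.
  - rewrite app_nth1 by lia; apply G; lia.
Qed.

Lemma pos_app alg s t i : (i <= length s)%nat -> Defs.pos alg (s ++ t) i = Defs.pos alg s i.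
Proof.
  intros Hi; unfold Defs.pos; rewrite firstn_app.
  replace (i - length s)%nat with 0%nat by lia; simpl; rewrite app_nil_r; reflexivity.
Qed.

Section Adversary.
Variables (alg : algorithm) (B : Z).

(* State after m rounds: the stream and the two neighbours x, y of the centre bounding
   the current sector; the next leaf is announced clockwise right after 0y. *)
Fixpoint adversary (m : nat) : list step * nat * nat :=
  match m with
  | O => ([(0, 0); (0, 1)]%nat, 1%nat, 2%nat)
  | S m' =>
      let '(s, x, y) := adversary m' in
      let s' := s ++ [(0%nat, y)] in
      let v := length s' in
      let P := Defs.pos alg s' in
      if sector_count (box B) (spoke P x) (spoke P v)
           <=? sector_count (box B) (spoke P v) (spoke P y)
      then (s', x, v) else (s', v, y)
  end.

Definition adv_stream m := fst (fst (adversary m)).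
Definition adv_x m := snd (fst (adversary m)).
Definition adv_y m := snd (adversary m).

Lemma adv_stream_S m : adv_stream (S m) = adv_stream m ++ [(0%nat, adv_y m)].
Proof.
  unfold adv_stream, adv_y; simpl; destruct (adversary m) as [[s x] y].
  destruct Nat.leb; reflexivity.
Qed.

Lemma adversary_inv m :
  length (adv_stream m) = (m + 2)%nat /\ star_stream (adv_stream m) /\
  (1 <= adv_x m <= m + 2)%nat /\ (1 <= adv_y m <= m + 2)%nat /\ adv_x m <> adv_y m.
Proof.
  induction m as [|m IH].
  - unfold adv_stream, adv_x, adv_y; simpl; split; [reflexivity|split; [|lia]].
    intros [|[|k]] Hk; unfold src, refn; simpl in *; repeat split; lia.
  - destruct IH as [L [G [Hx [Hy Hxy]]]].
    rewrite adv_stream_S, length_app; simpl.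
    split; [lia|]; split; [apply star_stream_snoc; auto; lia|].
    revert L Hx Hy Hxy; unfold adv_stream, adv_x, adv_y; simpl.
    destruct (adversary m) as [[s x] y]; simpl; intros L Hx Hy Hxy.
    destruct Nat.leb; simpl; rewrite length_app; simpl; lia.
Qed.

Lemma adversary_choice m :
  let P := Defs.pos alg (adv_stream (S m)) in
  let X := spoke P (adv_x m) in
  let V := spoke P (m + 3) in
  let Y := spoke P (adv_y m) in
  (adv_x (S m) = adv_x m /\ adv_y (S m) = (m + 3)%nat /\
     (sector_count (box B) X V <= sector_count (box B) V Y)%nat) \/
  (adv_x (S m) = (m + 3)%nat /\ adv_y (S m) = adv_y m /\
     (sector_count (box B) V Y < sector_count (box B) X V)%nat).
Proof.
  destruct (adversary_inv m) as [L _].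
  rewrite adv_stream_S; revert L; unfold adv_stream, adv_x, adv_y; simpl.
  destruct (adversary m) as [[s x] y]; simpl; intros L.
  rewrite length_app, L; simpl; replace (m + 2 + 1)%nat with (m + 3)%nat by lia.
  destruct Nat.leb eqn:E; simpl; [left|right]; 
    [apply Nat.leb_le in E | apply Nat.leb_gt in E]; auto.
Qed.

Lemma adv_stream_prefix m M : (m <= M)%nat -> exists t, adv_stream M = adv_stream m ++ t.
Proof.
  induction 1 as [|M _ [t Ht]]; [exists []; rewrite app_nil_r; reflexivity|].
  exists (t ++ [(0%nat, adv_y M)]); rewrite adv_stream_S, Ht, app_assoc; reflexivity.
Qed.

Hypothesis valid : valid_algorithm alg.

(* The rotation at 0 puts the new edge right after 0y, i.e. not between it and 0x. *)
Lemma adversary_new_spoke_between m :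
  let P := Defs.pos alg (adv_stream (S m)) in
  ccw_cyclic (spoke P (adv_x m)) (spoke P (m + 3)) (spoke P (adv_y m)).
Proof.
  destruct (adversary_inv m) as [_ [_ [Hx [Hy Hxy]]]].
  destruct (adversary_inv (S m)) as [L [G _]].
  intros P; destruct (valid _ (star_stream_valid _ G)) as [drawing rot].
  assert (R := rot ltac:(lia)); unfold rotation_ok in R; rewrite L in R; cbv zeta in R.
  replace (S m + 2 - 1)%nat with (m + 2)%nat in R by lia.
  assert (Last : nth (m + 2) (adv_stream (S m)) (0%nat, 0%nat) = (0%nat, adv_y m)).
  { destruct (adversary_inv m) as [L0 _].
    rewrite adv_stream_S, <- L0; apply nth_middle. }
  unfold src, refn in R; rewrite Last in R; simpl in R.
  replace (S (m + 2)) with (m + 3)%nat in R by lia.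
  assert (Adj : adj_before (adv_stream (S m)) (m + 2) 0 (adv_x m)).
  { exists (pred (adv_x m)); split; [lia|]; left; split; [apply G; lia | lia]. }
  specialize (R (adv_x m) Hxy Adj).
  apply (cyclic_swap_of_not _ _ ang_lt_irrefl ang_lt_trans); [..|exact R];
    apply (spokes_comparable (adv_stream (S m))); auto using star_stream_star; lia.
Qed.

Section Halving.
Variable M : nat.
Let Q := Defs.pos alg (adv_stream M).
Hypothesis spokes_in_box : forall i, (i <= M + 2)%nat -> In (spoke Q i) (box B).

Definition sector m := sector_count (box B) (spoke Q (adv_x m)) (spoke Q (adv_y m)).

Lemma spoke_final m i :
  (m <= M)%nat -> (i <= m + 2)%nat -> spoke (Defs.pos alg (adv_stream m)) i = spoke Q i.
Proof.
  intros Hm Hi; destruct (adv_stream_prefix m M Hm) as [t Ht].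
  destruct (adversary_inv m) as [L _].
  unfold Q, spoke; rewrite Ht, !pos_app by lia; reflexivity.
Qed.

Lemma sector_halves m : (m < M)%nat -> (2 * sector (S m) < sector m)%nat.
Proof.
  intros Hm; destruct (adversary_inv m) as [_ [_ [Hx [Hy _]]]].
  pose proof (adversary_new_spoke_between m) as Between.
  pose proof (adversary_choice m) as Choice; cbv zeta in Between, Choice.
  rewrite !(spoke_final (S m)) in Between, Choice by lia.
  pose proof (sector_count_split (box B) _ _ _ Between (spokes_in_box (m + 3) ltac:(lia))).
  unfold sector; destruct Choice as [[-> [-> C]]|[-> [-> C]]]; lia.
Qed.

Lemma sector_lower_bound d : (d <= M)%nat -> (2 ^ d <= sector (M - d) + 1)%nat.
Proof.
  induction d as [|d IH]; intros Hd; [simpl; lia|].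
  pose proof (sector_halves (M - S d) ltac:(lia)) as H.
  replace (S (M - S d)) with (M - d)%nat in H by lia.
  rewrite Nat.pow_succ_r'; specialize (IH ltac:(lia)); lia.
Qed.

Lemma box_large : (2 ^ M <= length (box B) + 1)%nat.
Proof.
  pose proof (sector_lower_bound M (le_n M)) as H; rewrite Nat.sub_diag in H.
  pose proof (sector_count_le (box B) (spoke Q (adv_x 0)) (spoke Q (adv_y 0))).
  unfold sector in H; lia.
Qed.

End Halving.
End Adversary.

Lemma zmax_spec l d : (d <= zmax l d)%Z /\ forall x, In x l -> (x <= zmax l d)%Z.
Proof.
  unfold zmax; revert d; induction l as [|a l IH]; intros d; simpl; [split; [lia|tauto]|].
  destruct (IH (Z.max d a)) as [H1 H2]; split; [lia|].
  intros x [->|Hx]; [lia|auto].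
Qed.

Lemma zmin_spec l d : (zmin l d <= d)%Z /\ forall x, In x l -> (zmin l d <= x)%Z.
Proof.
  unfold zmin; revert d; induction l as [|a l IH]; intros d; simpl; [split; [lia|tauto]|].
  destruct (IH (Z.min d a)) as [H1 H2]; split; [lia|].
  intros x [->|Hx]; [lia|auto].
Qed.

(* [drawing_area] is, by definition, the product of the spreads of the two coordinates. *)
Definition spread (f : nat -> Z) (n : nat) : Z :=
  let l := map f (seq 0 (S n)) in (zmax l (f 0%nat) - zmin l (f 0%nat))%Z.

Lemma spread_bound f n i : (i <= n)%nat -> (Z.abs (f i - f 0%nat) <= spread f n)%Z.
Proof.
  intros Hi; unfold spread.
  assert (Hin : In (f i) (map f (seq 0 (S n)))) by (apply in_map, in_seq; lia).
  pose proof (proj2 (zmax_spec _ (f 0%nat)) _ Hin).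
  pose proof (proj2 (zmin_spec _ (f 0%nat)) _ Hin).
  pose proof (proj1 (zmax_spec (map f (seq 0 (S n))) (f 0%nat))).
  pose proof (proj1 (zmin_spec (map f (seq 0 (S n))) (f 0%nat))).
  lia.
Qed.

Lemma star_spokes_in_box alg s B :
  planar_drawing s (Defs.pos alg s) -> star s -> (3 <= length s)%nat ->
  (drawing_area alg s <= B)%Z ->
  forall i, (i <= length s)%nat -> In (spoke (Defs.pos alg s) i) (box B).
Proof.
  intros drawing star_s L3 Area.
  set (P := Defs.pos alg s) in *; set (n := length s) in *.
  set (w := spread (fun i => fst (P i)) n); set (h := spread (fun i => snd (P i)) n).
  change (w * h <= B)%Z in Area.
  assert (Hw : forall i, (i <= n)%nat -> (Z.abs (fst (spoke P i)) <= w)%Z)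
    by (intros i Hi; apply (spread_bound (fun i => fst (P i)) n i Hi)).
  assert (Hh : forall i, (i <= n)%nat -> (Z.abs (snd (spoke P i)) <= h)%Z)
    by (intros i Hi; apply (spread_bound (fun i => snd (P i)) n i Hi)).
  assert (Ncol := spokes_not_collinear s P drawing star_s L3).
  (* a drawing of zero width or height would put all spokes on one line *)
  assert (1 <= w)%Z.
  { destruct (Z_le_dec 1 w); [auto|exfalso]; apply Ncol; intros i j Hi Hj.
    assert (Ei : fst (spoke P i) = 0%Z) by (specialize (Hw i ltac:(lia)); lia).
    assert (Ej : fst (spoke P j) = 0%Z) by (specialize (Hw j ltac:(lia)); lia).
    unfold cross; rewrite Ei, Ej; ring. }
  assert (1 <= h)%Z.
  { destruct (Z_le_dec 1 h); [auto|exfalso]; apply Ncol; intros i j Hi Hj.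
    assert (Ei : snd (spoke P i) = 0%Z) by (specialize (Hh i ltac:(lia)); lia).
    assert (Ej : snd (spoke P j) = 0%Z) by (specialize (Hh j ltac:(lia)); lia).
    unfold cross; rewrite Ei, Ej; ring. }
  intros i Hi; specialize (Hw i Hi); specialize (Hh i Hi).
  apply in_box; nia.
Qed.

Lemma adversary_area_large alg B M :
  valid_algorithm alg -> (1 <= M)%nat -> (length (box B) + 1 < 2 ^ M)%nat ->
  (B < drawing_area alg (adv_stream alg B M))%Z.
Proof.
  intros valid HM Large.
  destruct (adversary_inv alg B M) as [L [G _]].
  destruct (Z_lt_le_dec B (drawing_area alg (adv_stream alg B M))) as [|Area]; [auto|].
  destruct (valid _ (star_stream_valid _ G)) as [drawing _].
  pose proof (star_spokes_in_box alg _ B drawing (star_stream_star _ G) ltac:(lia) Area)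
    as InBox.
  rewrite L in InBox; pose proof (box_large alg B valid M InBox); lia.
Qed.

Theorem theorem1 :
  exists c : R, 0 < c /\
  exists n0 : nat,
  forall alg : algorithm, valid_algorithm alg ->
  forall n : nat, (n0 <= n)%nat ->
  exists s : list step,
    valid_input s /\ length s = n /\
    c * Rpower 2 (INR n / 2) <= IZR (drawing_area alg s).
Proof.
  exists (/ 16); split; [lra|]; exists 9%nat; intros alg valid n Hn.
  set (k := Nat.div2 (n - 7)).
  assert (Hk : (2 * k <= n - 7 <= 2 * k + 1)%nat)
    by (pose proof (Nat.div2_odd (n - 7)); destruct (Nat.odd (n - 7)); simpl in *; lia).
  set (B := Z.of_nat (2 ^ k)).
  exists (adv_stream alg B (n - 2)).
  destruct (adversary_inv alg B (n - 2)) as [L [G _]].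
  split; [apply star_stream_valid, G|]; split; [lia|].
  assert (Area : (B < drawing_area alg (adv_stream alg B (n - 2)))%Z).
  { apply adversary_area_large; [exact valid|lia|].
    rewrite length_box; replace (Z.to_nat (2 * B + 1)) with (2 * 2 ^ k + 1)%nat by lia.
    assert (Pow : (2 ^ (k + (k + 5)) <= 2 ^ (n - 2))%nat)
      by (apply Nat.pow_le_mono_r; lia).
    rewrite !Nat.pow_add_r in Pow; simpl (2 ^ 5)%nat in Pow.
    pose proof (Nat.pow_nonzero 2 k); nia. }
  apply IZR_lt in Area.
  assert (Rpower 2 (INR n / 2) <= 2 ^ (k + 4)).
  { rewrite <- Rpower_pow by lra; apply Rle_Rpower; [lra|].
    assert (INR n <= INR (2 * (k + 4))) by (apply le_INR; lia).
    rewrite mult_INR in H; simpl (INR 2) in H; lra. }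
  assert (IZR B = 2 ^ k)
    by (unfold B; rewrite <- INR_IZR_INZ, pow_INR; reflexivity).
  rewrite pow_add in H; simpl in H; lra.
Qed.
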